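(* Under the standing setup, $e(U)\geq 4$; in particular $G^\ast[U]$ has at least one non-trivial component.
   Context: Standing setup: Let $m\geq 88$. Let $\mathcal{G}(m,F_6)$ be the set of $F_6$-free graphs with exactly $m$ edges and no isolated vertices, where $F_6=K_1\vee P_5$ (a vertex joined to every vertex of a path on 5 vertices). Let $G^\ast\in\mathcal{G}(m,F_6)$ have the maximum spectral radius among all graphs in $\mathcal{G}(m,F_6)$; $G^\ast$ is connected. Let $\lambda=\lambda(G^\ast)$ be its spectral radius and $\mathbf{x}$ its Perron vector (positive unit eigenvector for $\lambda$), with entry $x_v$ at vertex $v$. Let $u^\ast$ be a vertex with $x_{u^\ast}=\max_v x_v$. Set $U=N_{G^\ast}(u^\ast)$ and $W=V(G^\ast)\setminus N_{G^\ast}[u^\ast]$. For $X,Y\subseteq V(G^\ast)$, $e(X,Y)$ is the number of edges with one end in $X$ and the other in $Y$, and $e(X)$ is the number of edges inside $X$. *)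

From HB Require Import structures.
From mathcomp Require Import all_boot all_order all_algebra.
From mathcomp Require Import reals.
Set Implicit Arguments. Unset Strict Implicit. Unset Printing Implicit Defensive.
Import Order.TTheory GRing.Theory Num.Theory.
Local Open Scope ring_scope.

Definition simple_graph (n : nat) (e : rel 'I_n) : Prop :=
  (forall x y, e x y = e y x) /\ (forall x, ~~ e x x).

Definition num_edges (n : nat) (e : rel 'I_n) : nat :=
  #|[set p : 'I_n * 'I_n | e p.1 p.2 && (p.1 < p.2)%N]|.

Definition edges_in (n : nat) (e : rel 'I_n) (X : {set 'I_n}) : nat :=
  #|[set p : 'I_n * 'I_n | [&& p.1 \in X, p.2 \in X, e p.1 p.2 & (p.1 < p.2)%N]]|.

Definition no_isolated (n : nat) (e : rel 'I_n) : Prop :=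
  forall v, exists w, e v w.

(* G contains F_6 = K_1 \/ P_5 as a (not necessarily induced) subgraph:
   a vertex c and a path a1 a2 a3 a4 a5, all six distinct, c adjacent to all ai. *)
Definition contains_F6 (n : nat) (e : rel 'I_n) : Prop :=
  exists c a1 a2 a3 a4 a5 : 'I_n,
    uniq [:: c; a1; a2; a3; a4; a5] /\
    [/\ e c a1, e c a2, e c a3, e c a4 & e c a5] /\
    [/\ e a1 a2, e a2 a3, e a3 a4 & e a4 a5].

Definition in_GmF6 (m n : nat) (e : rel 'I_n) : Prop :=
  [/\ simple_graph e, num_edges e = m, no_isolated e & ~ contains_F6 e].

Definition adjmx (R : realType) (n : nat) (e : rel 'I_n) : 'M[R]_n :=
  \matrix_(i, j) (e i j)%:R.

Definition spectral_radius (R : realType) (n : nat) (e : rel 'I_n) (lam : R) : Prop :=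
  eigenvalue (adjmx R e) lam /\ forall mu, eigenvalue (adjmx R e) mu -> mu <= lam.

Definition perron_vector (R : realType) (n : nat) (e : rel 'I_n) (lam : R)
  (x : 'cV[R]_n) : Prop :=
  [/\ adjmx R e *m x = lam *: x, (forall i, 0 < x i 0) & \sum_i (x i 0) ^+ 2 = 1].

Definition nbhd (n : nat) (e : rel 'I_n) (u : 'I_n) : {set 'I_n} := [set v | e u v].

From HB Require Import structures.
From mathcomp Require Import all_boot all_order all_algebra.
From mathcomp Require Import reals.
From mathcomp Require Import zify ring lra.
Set Implicit Arguments. Unset Strict Implicit. Unset Printing Implicit Defensive.
Import Order.TTheory GRing.Theory Num.Theory.
Local Open Scope ring_scope.

(* The book K_2 \/ kK_1, plus a disjoint edge when m is even, is F_6-free with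
   m = 2k+1+p edges and has spectral radius mu with mu^2 = mu + 2k; extremality of
   G* gives lambda >= mu > 5.  On the other hand, evaluating A^2 x = lambda^2 x at
   the maximal entry of the Perron vector bounds lambda^2 by the number of walks of
   length two from u*, which is at most m + e(U).  Hence
   m + e(U) >= mu^2 > 2k + 5 >= m + 3. *)

Lemma card_set_pairs n (P : 'I_n -> 'I_n -> bool) :
  #|[set p : 'I_n * 'I_n | P p.1 p.2]| = (\sum_i \sum_j (P i j : nat))%N.
Proof.
rewrite cardE -sum1_size big_enum /= big_mkcond /= pair_big /=.
by apply: eq_bigr => -[i j] _; rewrite inE; case: (P _ _).
Qed.

Lemma num_edgesE n (e : rel 'I_n) :
  num_edges e = (\sum_i \sum_j ((e i j && (i < j)%N) : nat))%N.
Proof. exact: (card_set_pairs (fun i j => e i j && (i < j)%N)). Qed.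

Lemma edges_inE n (e : rel 'I_n) (X : {set 'I_n}) :
  edges_in e X = (\sum_i \sum_j ([&& i \in X, j \in X, e i j & (i < j)%N] : nat))%N.
Proof.
exact: (card_set_pairs (fun i j => [&& i \in X, j \in X, e i j & (i < j)%N])).
Qed.

Lemma edges_in_gt0_witness n (e : rel 'I_n) (X : {set 'I_n}) :
  (0 < edges_in e X)%N -> exists v w, [/\ v \in X, w \in X & e v w].
Proof.
case/card_gt0P => -[v w]; rewrite inE /= => /and4P [Xv Xw vw _].
by exists v, w.
Qed.

Section WalksOfLengthTwo.

Variables (n : nat) (e : rel 'I_n).
Hypothesis simple_e : simple_graph e.

Definition walks2 (u : 'I_n) : nat := \sum_v \sum_w ((e u v && e v w) : nat).

(* An edge vw is the last step of at most the two walks u v w and u w v, and of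
   both only when v and w are neighbours of u. *)
Lemma walks2_le_edges u : (walks2 u <= num_edges e + edges_in e (nbhd e u))%N.
Proof.
case: simple_e => sym irr.
rewrite /walks2 num_edgesE edges_inE -big_split /=.
have split_ends : (\sum_v \sum_w ((e u v && e v w) : nat) =
   \sum_v \sum_w ((e u v && e v w && (v < w)%N) : nat)
   + \sum_v \sum_w ((e u w && e v w && (v < w)%N) : nat))%N.
  rewrite [X in (_ + X)%N]exchange_big -big_split; apply: eq_bigr => v _.
  rewrite -big_split; apply: eq_bigr => w _ /=; rewrite (sym w v).
  case: (ltngtP v w) => [||/val_inj vw]; rewrite ?andbT ?andbF ?addn0 //.
  by rewrite vw (negbTE (irr w)) andbF.
rewrite split_ends -big_split; apply: leq_sum => v _.
rewrite -!big_split; apply: leq_sum => w _; rewrite !inE.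
by case: (e u v); case: (e v w); case: (e u w); case: (v < w)%N.
Qed.

End WalksOfLengthTwo.

Lemma eigenvalue_sqr_le_walks2 (R : realType) n (e : rel 'I_n) (lam : R)
    (x : 'cV[R]_n) u :
  adjmx R e *m x = lam *: x -> (forall v, 0 < x v 0) ->
  (forall v, x v 0 <= x u 0) -> lam ^+ 2 <= (walks2 e u)%:R.
Proof.
move=> eig_x x_gt0 x_le_u.
have row_eq i : \sum_j (e i j)%:R * x j 0 = lam * x i 0.
  move/matrixP: eig_x => /(_ i 0); rewrite !mxE => <-.
  by apply: eq_bigr => j _; rewrite mxE.
rewrite -(ler_pM2r (x_gt0 u)).
have -> : lam ^+ 2 * x u 0 = \sum_v (e u v)%:R * \sum_w (e v w)%:R * x w 0.
  rewrite expr2 -mulrA -row_eq mulr_sumr; apply: eq_bigr => v _.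
  by rewrite mulrCA row_eq.
rewrite natr_sum mulr_suml; apply: ler_sum => v _.
rewrite natr_sum !mulr_suml mulr_sumr; apply: ler_sum => w _.
by rewrite mulrA -natrM mulnb ler_wpM2l.
Qed.

(* Collatz--Wielandt bound, with the positive vector acting on the left as in
   the definition of [eigenvalue]. *)
Lemma eigenvalue_norm_le_subinvariant (R : realType) n (A : 'M[R]_n) (y : 'rV[R]_n)
    (mu a : R) :
  (forall i j, 0 <= A i j) -> (forall i, 0 < y 0 i) ->
  (forall j, \sum_i y 0 i * A i j <= mu * y 0 j) -> eigenvalue A a -> `|a| <= mu.
Proof.
move=> A_ge0 y_gt0 y_sub /eigenvalueP [v eig_v v_neq0].
have [i0 vi0] : exists i, v 0 i != 0.
  apply/existsP; apply: contraR v_neq0 => /existsPn v0.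
  by apply/eqP/rowP => i; rewrite mxE; apply/eqP/negbNE/v0.
pose r i := `|v 0 i| / y 0 i.
have [j _ r_max] := @arg_maxP _ _ _ i0 xpredT r isT.
have r_gt0 : 0 < r j.
  by apply: lt_le_trans (r_max i0 isT); rewrite divr_gt0 ?normr_gt0.
have vj : `|v 0 j| = r j * y 0 j by rewrite /r divfK ?gt_eqF.
rewrite -(ler_pM2r (_ : 0 < `|v 0 j|)); last by rewrite vj mulr_gt0.
have -> : `|a| * `|v 0 j| = `|\sum_i v 0 i * A i j|.
  by rewrite -normrM; move/rowP: eig_v => /(_ j); rewrite !mxE => <-.
apply: le_trans (ler_norm_sum _ _ _) _.
apply: (@le_trans _ _ (\sum_i r j * (y 0 i * A i j))).
  apply: ler_sum => i _; rewrite normrM (ger0_norm (A_ge0 i j)) mulrA.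
  by rewrite ler_wpM2r // -ler_pdivrMr //; apply: r_max.
by rewrite -mulr_sumr vj mulrCA ler_wpM2l // ltW.
Qed.

(* The book K_2 \/ kK_1 on the vertices 0, 1 (spine) and 2, ..., k+1 (pages),
   together with a disjoint edge between k+2 and k+3 when [p] holds. *)
Definition book_adj (k a b : nat) : bool :=
  [|| (a < 2) && (b < 2), (a < 2) && (2 <= b < k + 2),
      (b < 2) && (2 <= a < k + 2) | (k + 2 <= a) && (k + 2 <= b)]%N && (a != b).

Section Book.

Variables (k : nat) (p : bool).

Local Notation N := (k + 2 + 2 * p)%N.

Definition book : rel 'I_N := fun a b => book_adj k a b.

Lemma big_book_split (T : Type) (idx : T) (op : Monoid.law idx) (F : nat -> T) :
  \big[op/idx]_(a < N) F a =
  op (op (op (F 0%N) (F 1%N)) (\big[op/idx]_(2 <= a < k + 2) F a))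
     (if p then op (F (k + 2)%N) (F (k + 3)%N) else idx).
Proof.
have spine_pages : \big[op/idx]_(0 <= a < k + 2) F a =
    op (op (F 0%N) (F 1%N)) (\big[op/idx]_(2 <= a < k + 2) F a).
  by rewrite (@big_ltn _ _ _ 0) ?(@big_ltn _ _ _ 1) ?Monoid.mulmA //; lia.
rewrite -(big_mkord xpredT); case: p; last by rewrite muln0 addn0 Monoid.mulm1.
rewrite muln1 (_ : k + 2 + 2 = (k + 2).+2)%N; last lia.
by rewrite !big_nat_recr //= spine_pages -addnS !Monoid.mulmA.
Qed.

Lemma book_upper_deg a : (a < N)%N ->
  (\sum_(b < N) ((book_adj k a b && (a < b)) : nat) =
   (a < 2) * k + (a == 0) + (a == k + 2))%N.
Proof.
move=> a_lt; rewrite (big_book_split addn (fun b => (book_adj k a b && (a < b)%N : nat))).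
rewrite (eq_big_nat _ _ (F2 := fun=> (a < 2 : nat))) => [|b b_page]; last first.
  by rewrite /book_adj; lia.
by rewrite sum_nat_const_nat /book_adj; case: p a_lt => /= a_lt; lia.
Qed.

Lemma num_edges_book : num_edges book = (2 * k + 1 + p)%N.
Proof.
pose F a := ((a < 2) * k + (a == 0) + (a == k + 2))%N.
rewrite num_edgesE (eq_bigr (fun a : 'I_N => F a)) => [|a _]; last first.
  exact: book_upper_deg.
rewrite (big_book_split addn F) (eq_big_nat _ _ (F2 := fun=> 0%N)) => [|a a_page].
  by rewrite big1_eq /F; case: p => /=; lia.
by rewrite /F; lia.
Qed.

Lemma book_three_nbrs_spine (c a1 a2 a3 : 'I_N) :
  uniq [:: a1; a2; a3] -> book c a1 -> book c a2 -> book c a3 -> (c < 2)%N.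
Proof.
have nbr_off_spine (a : nat) : (2 <= c)%N -> book_adj k c a ->
    (a < 2)%N && (c < k + 2)%N || (k + 2 <= a)%N && (k + 2 <= c)%N && (a != c).
  by rewrite /book_adj; lia.
have [//|c_ge2] := ltnP c 2.
rewrite -(map_inj_uniq val_inj) /= !inE !negb_or => uniq_a.
move=> /(nbr_off_spine _ c_ge2) ca1 /(nbr_off_spine _ c_ge2) ca2 /(nbr_off_spine _ c_ge2) ca3.
by have := ltn_ord a1; have := ltn_ord a2; have := ltn_ord a3; lia.
Qed.

Lemma book_spine_nbhd_edge c a b :
  (c < 2)%N -> book_adj k c a -> book_adj k c b -> book_adj k a b ->
  (a == 1 - c)%N || (b == 1 - c)%N.
Proof.
have nbr_spine v : (c < 2)%N -> book_adj k c v -> (v < k + 2)%N && (v != c).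
  by rewrite /book_adj; lia.
have edge_low : (a < k + 2)%N -> (b < k + 2)%N -> book_adj k a b -> (a < 2)%N || (b < 2)%N.
  by rewrite /book_adj; lia.
move=> c_lt2 /(nbr_spine _ c_lt2)/andP[a_lt a_neq] /(nbr_spine _ c_lt2)/andP[b_lt b_neq].
move/(edge_low a_lt b_lt); lia.
Qed.

Lemma book_F6_free : ~ contains_F6 book.
Proof.
move=> [c [a1 [a2 [a3 [a4 [a5 [uniq_ca [[ca1 ca2 ca3 ca4 ca5] [a12 _ _ a45]]]]]]]]].
have uniq_a123 : uniq [:: a1; a2; a3].
  apply: subseq_uniq uniq_ca; apply: subseq_trans (subseq_cons _ c).
  by rewrite /= !eqxx.
have c_spine := book_three_nbrs_spine uniq_a123 ca1 ca2 ca3.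
rewrite -(map_inj_uniq val_inj) /= in uniq_ca.
move: (book_spine_nbhd_edge c_spine ca4 ca5 a45) (book_spine_nbhd_edge c_spine ca1 ca2 a12) uniq_ca.
by move=> /orP[]/eqP-> /orP[]/eqP->; rewrite /= !inE eqxx ?orbT /= ?andbF.
Qed.

Lemma book_no_isolated : no_isolated book.
Proof.
move=> v; have v_lt := ltn_ord v.
suff [w w_lt vw] : exists2 w, (w < N)%N & book_adj k v w by exists (Ordinal w_lt).
have [v_spine|v_ge2] := ltnP v 2; first by exists (1 - v)%N; rewrite /book_adj; lia.
have [v_page|v_extra] := ltnP v (k + 2); first by exists 0%N; rewrite /book_adj; lia.
by exists (2 * k + 5 - v)%N; rewrite /book_adj; lia.
Qed.

Lemma book_in_GmF6 : in_GmF6 (2 * k + 1 + p) book.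
Proof.
split; [split | exact: num_edges_book | exact: book_no_isolated | exact: book_F6_free].
- by move=> a b; rewrite /book /book_adj; apply/idP/idP; lia.
- by move=> a; rewrite /book /book_adj; lia.
Qed.

Variable R : realType.

(* (mu, mu, 2, ..., 2, t, t): for t = 0 an eigenvector of the book for mu, for
   t = 1 a positive subinvariant vector. *)
Definition book_vec (mu t : R) (a : nat) : R :=
  if (a < 2)%N then mu else if (a < k + 2)%N then 2 else t.

Local Ltac eval_bool c :=
  first [ rewrite (_ : c = true); last by lia
        | rewrite (_ : c = false); last by lia ].

Local Ltac book_eval := rewrite /book_vec /book_adj; repeat match goal with
  | |- context [if ?c then _ else _] => eval_bool c
  | |- context [nat_of_bool ?c] => eval_bool c
  end.

Lemma book_vec_col_sum (mu t : R) b : (b < N)%N ->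
  \sum_(a < N) book_vec mu t a * (book_adj k a b)%:R =
  if (b < 2)%N then mu + 2 *+ k else if (b < k + 2)%N then mu + mu else t.
Proof.
move=> b_lt.
rewrite (big_book_split +%R (fun a => book_vec mu t a * (book_adj k a b)%:R)).
rewrite (eq_big_nat _ _ (F2 := fun=> if (b < 2)%N then 2 else 0)) => [|a a_page]; last first.
  by case: (ltnP b 2) => ?; book_eval; rewrite /= ?mulr1 ?mulr0.
rewrite sumr_const_nat addnK.
have [b_spine|b_ge2] := ltnP b 2.
  by case: b b_lt b_spine => [|[|//]] b_lt _; case: p b_lt => ?; book_eval;
    rewrite /= ?(mulr0, mulr1, mul0rn, addr0, add0r).
have [b_page|b_extra] := ltnP b (k + 2).
  by case: p b_lt => ?; book_eval; rewrite /= ?(mulr0, mulr1, mul0rn, addr0, add0r).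
case: p b_lt => b_lt; last by lia.
have [->|->] : b = (k + 2)%N \/ b = (k + 3)%N by lia.
all: by book_eval; rewrite /= ?(mulr0, mulr1, mul0rn, addr0, add0r).
Qed.

Lemma book_spectral_radius (mu : R) :
  mu * mu = mu + 2 *+ k -> 1 <= mu -> spectral_radius book mu.
Proof.
move=> mu_root mu_ge1.
pose y t : 'rV[R]_N := \row_a book_vec mu t a.
have col t (j : 'I_N) : \sum_i y t 0 i * adjmx R book i j =
    if (j < 2)%N then mu + 2 *+ k else if (j < k + 2)%N then mu + mu else t.
  rewrite -(book_vec_col_sum mu t (ltn_ord j)).
  by apply: eq_bigr => i _; rewrite !mxE.
split.
  apply/eigenvalueP; exists (y 0).
    apply/rowP => j; rewrite !mxE col /book_vec.
    case: ifP => _; first by rewrite mu_root.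
    by case: ifP => _; rewrite ?mulr0 // mulr_natr.
  have N_gt0 : (0 < N)%N by lia.
  apply/negP => /eqP/rowP/(_ (Ordinal N_gt0)); rewrite !mxE /book_vec /= => mu0.
  by move: mu_ge1; rewrite mu0 ler10.
move=> a eig_a; apply: le_trans (ler_norm a) _.
apply: (eigenvalue_norm_le_subinvariant (y := y 1) _ _ _ eig_a).
- by move=> i j; rewrite mxE ler0n.
- by move=> i; rewrite mxE /book_vec; case: ifP => _; [exact: lt_le_trans mu_ge1 | case: ifP].
- move=> j; rewrite col mxE /book_vec.
  case: ifP => _; first by rewrite mu_root.
  by case: ifP => _; rewrite ?mulr1 // mulr_natr.
Qed.

End Book.

Arguments book : clear implicits.

Lemma book_root_gt5 (R : realType) k :
  (11 <= k)%N -> exists2 mu : R, mu * mu = mu + 2 *+ k & 5 < mu.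
Proof.
move=> k_ge11; pose s : R := Num.sqrt (8 * k + 1)%:R.
have s_ge0 : 0 <= s by apply: sqrtr_ge0.
have s_sq : s * s = 8 * k%:R + 1 by rewrite -expr2 sqr_sqrtr ?ler0n // natrD natrM.
have k_ge : 11 <= k%:R :> R by rewrite (ler_nat R 11 k).
have s_gt9 : 9 < s by nra.
exists ((1 + s) / 2); last lra.
by rewrite -mulr_natr; nra.
Qed.

Unset Implicit Arguments.

Theorem lemma3p1 (R : realType) (m n : nat) (e : rel 'I_n) (lam : R)
  (x : 'cV[R]_n) (ustar : 'I_n) :
  (88 <= m)%N ->
  in_GmF6 m e ->
  spectral_radius e lam ->
  (forall (n' : nat) (e' : rel 'I_n') (mu : R),
      in_GmF6 m e' -> spectral_radius e' mu -> mu <= lam) ->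
  perron_vector e lam x ->
  (forall v, x v 0 <= x ustar 0) ->
  (4 <= edges_in e (nbhd e ustar))%N /\
  (exists v w, [/\ v \in nbhd e ustar, w \in nbhd e ustar & e v w]).
Proof.
move=> m_ge88 GmF6 _ extremal [eig_x x_gt0 _] x_max.
have [simple_e edges_e _ _] := GmF6.
set eU := edges_in e (nbhd e ustar).
have lam_sq : lam ^+ 2 <= (m + eU)%:R.
  apply: le_trans (eigenvalue_sqr_le_walks2 eig_x x_gt0 x_max) _.
  by rewrite ler_nat -edges_e walks2_le_edges.
pose k := (m - 1)./2; pose p := odd (m - 1).
have m_eq : m = (2 * k + 1 + p)%N.
  by have := odd_double_half (m - 1); rewrite -/k -/p -muln2; lia.
have [mu mu_root mu_gt5] := @book_root_gt5 R k ltac:(lia).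
have mu_le_lam : mu <= lam.
  apply: (extremal _ (book k p)); first by rewrite m_eq; exact: book_in_GmF6.
  by apply: book_spectral_radius; lra.
suff eU_ge4 : (4 <= eU)%N by split=> //; apply: edges_in_gt0_witness; lia.
rewrite leqNgt; apply/negP => eU_lt4.
have : (m + eU <= 2 * k + 5)%N by case: p m_eq; lia.
rewrite -(ler_nat R) => /(le_trans lam_sq); rewrite natrD natrM.
by rewrite -mulr_natr in mu_root; nra.
Qed.
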